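(* Let $(\alpha_1,\alpha_2)$ be a good pair with canonical representation $(x,y,z)$. Then $x\ge\frac{1+2\sqrt7}{9}=1-2\tau$.
   Context: $\tau=\frac{4-\sqrt7}{9}$. A pair $(\alpha_1,\alpha_2)\in[0,1]^2$ is a good pair if $\max\{\frac14,\frac{\alpha_1+\sqrt{2\alpha_1-1}}{2}\}\le\alpha_2$ and $\max\{\alpha_2,1-\alpha_2,\frac{1+\tau^2}{2}\}\le\alpha_1$, and in addition the unique $(x,y,z)\in[0,1]^3$ with $x+y+z=1$, $x\ge\frac12$, $\alpha_1=x^2+y^2$, $\alpha_2=x^2+z^2$ satisfies $2x^2+z^2\ge1$; this $(x,y,z)$ is the canonical representation. *)

From Stdlib Require Import Reals.
Open Scope R_scope.

Definition tau : R := (4 - sqrt 7) / 9.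

Definition is_rep (a1 a2 x y z : R) : Prop :=
  0 <= x <= 1 /\ 0 <= y <= 1 /\ 0 <= z <= 1 /\
  x + y + z = 1 /\ x >= 1/2 /\
  a1 = x ^ 2 + y ^ 2 /\ a2 = x ^ 2 + z ^ 2.

Definition good_ineqs (a1 a2 : R) : Prop :=
  0 <= a1 <= 1 /\ 0 <= a2 <= 1 /\
  Rmax (1/4) ((a1 + sqrt (2 * a1 - 1)) / 2) <= a2 /\
  Rmax (Rmax a2 (1 - a2)) ((1 + tau ^ 2) / 2) <= a1.

Definition good_pair (a1 a2 : R) : Prop :=
  good_ineqs a1 a2 /\
  exists x y z : R,
    is_rep a1 a2 x y z /\
    (forall x' y' z' : R, is_rep a1 a2 x' y' z' -> x' = x /\ y' = y /\ z' = z) /\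
    2 * x ^ 2 + z ^ 2 >= 1.

(** Since [α₂ ≤ α₁] we get [z ≤ y], so [z ≤ (1 - x)/2].  Plugging this into
    [2x² + z² ≥ 1] gives [9x² - 2x - 3 ≥ 0], whose larger root is
    [(1 + 2√7)/9 = 1 - 2τ]; as [x ≥ 1/2] exceeds the smaller root, [x] lies
    above the larger one. *)

From Stdlib Require Import Reals Lra Psatz.
Open Scope R_scope.

Lemma one_minus_two_tau : (1 + 2 * sqrt 7) / 9 = 1 - 2 * tau.
Proof. unfold tau; field. Qed.

Lemma sqrt7_lt_3 : sqrt 7 < 3.
Proof.
  rewrite <- sqrt_square by lra.
  apply sqrt_lt_1; lra.
Qed.

Lemma quadratic_larger_root (x : R) :
  0 <= x -> 9 * x ^ 2 - 2 * x - 3 >= 0 -> x >= (1 + 2 * sqrt 7) / 9.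
Proof.
  intros Hx Hq.
  assert (S7 : sqrt 7 * sqrt 7 = 7) by (apply sqrt_sqrt; lra).
  assert (S0 := sqrt_pos 7).
  assert (S3 := sqrt7_lt_3).
  assert (Hfactor : 9 * x ^ 2 - 2 * x - 3
                    = 9 * (x - (1 + 2 * sqrt 7) / 9) * (x - (1 - 2 * sqrt 7) / 9))
    by nra.
  assert (Hsmall : 0 < x - (1 - 2 * sqrt 7) / 9) by nra.
  apply Rle_ge; apply Rnot_lt_le; intro Hlt.
  nra.
Qed.

Lemma rep_z_le_y {a1 a2 x y z : R} :
  is_rep a1 a2 x y z -> a2 <= a1 -> z <= y.
Proof.
  intros (_ & (Hy0 & _) & (Hz0 & _) & _ & _ & E1 & E2) Ha; subst a1 a2.
  nra.
Qed.

Lemma rep_quadratic {x y z : R} :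
  x + y + z = 1 -> 0 <= z <= y -> 2 * x ^ 2 + z ^ 2 >= 1 ->
  9 * x ^ 2 - 2 * x - 3 >= 0.
Proof. intros Hs Hzy Hq; nra. Qed.

Lemma good_pair_le {a1 a2 : R} : good_pair a1 a2 -> a2 <= a1.
Proof.
  intros [(_ & _ & _ & Hmax) _].
  eapply Rle_trans; [| exact Hmax].
  eapply Rle_trans; [apply Rmax_l | apply Rmax_l].
Qed.

Lemma good_pair_rep_condition {a1 a2 x y z : R} :
  good_pair a1 a2 -> is_rep a1 a2 x y z -> 2 * x ^ 2 + z ^ 2 >= 1.
Proof.
  intros [_ (x0 & y0 & z0 & _ & Huniq & Hq)] Hr.
  destruct (Huniq x y z Hr) as (-> & -> & ->).
  exact Hq.
Qed.

Theorem mainTheorem8 (a1 a2 x y z : R) :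
  good_pair a1 a2 ->
  is_rep a1 a2 x y z ->
  (1 + 2 * sqrt 7) / 9 = 1 - 2 * tau /\ x >= (1 + 2 * sqrt 7) / 9.
Proof.
  intros Hgood Hr.
  split; [exact one_minus_two_tau |].
  assert (Hzy : z <= y) by exact (rep_z_le_y Hr (good_pair_le Hgood)).
  assert (Hq := good_pair_rep_condition Hgood Hr).
  destruct Hr as ((Hx0 & _) & _ & (Hz0 & _) & Hs & _).
  apply quadratic_larger_root; [exact Hx0 |].
  exact (rep_quadratic Hs (conj Hz0 Hzy) Hq).
Qed.
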